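(* Let $S(0)>0$, $\sigma>0$, $T>0$, $K>0$, and real numbers $r<\mu$. Let $S(T)=S(0)e^{\mu T-\frac12\sigma^2T+\sigma\sqrt T Z}$ with $Z\sim N(0,1)$ under $P$, and $C(T)=(S(T)-K)^+$. For $x\in[0,1)$ let $C_x=e^{-rT}\big(\mathbb{E}_P(C(T))-\tfrac12xS(0)(e^{\mu T}-e^{rT})\big)$ and $$d_1=\frac{1}{\sigma\sqrt T}\Big(\ln\frac{(xS(0)-C_x)e^{rT}}{S(0)x}-\mu T+\tfrac12\sigma^2T\Big),\quad d=\frac{1}{\sigma\sqrt T}\Big(\ln\frac{K}{S(0)}-\mu T+\tfrac12\sigma^2T\Big),$$ $$d_2=\frac{1}{\sigma\sqrt T}\Big(\ln\frac{K+(C_x-xS(0))e^{rT}}{S(0)(1-x)}-\mu T+\tfrac12\sigma^2T\Big),$$ with the convention $d_1=-\infty$ whenever $x=0$ or $xS(0)-C_x\le0$. Then $d_1<d<d_2$.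
   Context: The paper assumes $\mu>r$ throughout; $\mathbb{E}_P$ is expectation under the physical measure $P$. *)

From HB Require Import structures.
From mathcomp Require Import all_boot all_order all_algebra.
From mathcomp Require Import all_classical all_reals all_analysis.
Set Implicit Arguments. Unset Strict Implicit. Unset Printing Implicit Defensive.
Import Order.TTheory GRing.Theory Num.Theory.
Local Open Scope ring_scope.

Section defs.
Variable R : realType.

Definition stock_T (S0 mu sigma Tm z : R) : R :=
  S0 * expR (mu * Tm - 2^-1 * sigma ^+ 2 * Tm + sigma * Num.sqrt Tm * z).

Definition call_payoff (S0 mu sigma Tm K z : R) : R :=
  Num.max (stock_T S0 mu sigma Tm z - K) 0.

(* C_x = e^{-rT} (E_P[C(T)] - x S(0)(e^{mu T} - e^{r T})/2), EC = E_P[C(T)] *)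
Definition Cx (EC S0 mu r Tm x : R) : R :=
  expR (- r * Tm) * (EC - 2^-1 * x * S0 * (expR (mu * Tm) - expR (r * Tm))).

Definition dfun (sigma mu Tm a : R) : R :=
  (sigma * Num.sqrt Tm)^-1 * (ln a - mu * Tm + 2^-1 * sigma ^+ 2 * Tm).

End defs.

(* Since dfun is increasing in its last argument, everything reduces to
   comparing a1 := (x S0 - C_x) e^{rT} / (S0 x) and a2 with K / S0.  With
   u := S0 e^{mu T}, v := S0 e^{rT} and M := E[C(T)] - x ((u + v) / 2 - K) one
   has K / S0 - a1 = M / (S0 x) and a2 - K / S0 = M / (S0 (1 - x)), so it
   suffices that M > 0.  This follows from v < u, 0 <= x < 1 and the two bounds
   0 < E[C(T)] and u - K <= E[C(T)]: the second because (s - K)^+ >= s - K and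
   E[S(T)] = u by the Gaussian moment generating function, the first because
   the payoff is at least 1 on an interval where the Gaussian density is
   bounded below. *)

From HB Require Import structures.
From mathcomp Require Import all_boot all_order all_algebra.
From mathcomp Require Import all_classical all_reals all_analysis.
From mathcomp Require Import ring lra measurable_realfun.
Import Order.TTheory GRing.Theory Num.Theory.
Local Open Scope ring_scope.

Section normal_density.
Context {R : realType}.
Local Notation mu := (@lebesgue_measure R).
Implicit Types m s x y c : R.

Lemma normal_pdf_gt0 m s x : s != 0 -> 0 < normal_pdf m s x.
Proof.
by move=> s0; rewrite /normal_pdf (negbTE s0) mulr_gt0 ?expR_gt0 ?normal_peak_gt0.
Qed.

Lemma le_normal_pdf m s x y : s != 0 -> m <= x -> x <= y ->
  normal_pdf m s y <= normal_pdf m s x.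
Proof.
move=> s0 mx xy; rewrite /normal_pdf (negbTE s0) ler_wpM2l ?normal_peak_ge0//.
rewrite ler_expR !mulNr lerN2 ler_wpM2r ?invr_ge0 ?mulrn_wge0 ?sqr_ge0//.
by rewrite ler_sqr ?nnegrE ?subr_ge0 ?(le_trans mx)// lerD2r.
Qed.

Lemma expR_mul_normal_pdf m s c x : s != 0 ->
  expR (c * x) * normal_pdf m s x =
  expR (c * m + c ^+ 2 * s ^+ 2 / 2) * normal_pdf (m + c * s ^+ 2) s x.
Proof.
move=> s0; rewrite /normal_pdf (negbTE s0) /normal_fun.
by rewrite [LHS]mulrCA [RHS]mulrCA -!expRD; congr (_ * expR _); field.
Qed.

Lemma normal_mgf m s c : s != 0 ->
  (\int[mu]_x (expR (c * x) * normal_pdf m s x)%:E =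
   (expR (c * m + c ^+ 2 * s ^+ 2 / 2))%:E)%E.
Proof.
move=> s0; under eq_integral do rewrite expR_mul_normal_pdf// EFinM.
rewrite ge0_integralZl//=.
- by rewrite integral_normal_pdf mule1.
- by apply/measurable_EFinP; exact: measurable_normal_pdf.
- by move=> x _; rewrite lee_fin normal_pdf_ge0.
Qed.

Lemma ge0_integral_normal_prob m s (f : R -> \bar R) :
  measurable_fun setT f -> (forall x, 0 <= f x)%E ->
  (\int[normal_prob m s]_x f x = \int[mu]_x (f x * (normal_pdf m s x)%:E))%E.
Proof.
move=> mf f0; have numu := @normal_prob_dominates R m s.
rewrite -(Radon_Nikodym_SigmaFinite.change_of_variables numu)//.
have mpdf : measurable_fun setT (fun x => (normal_pdf m s x)%:E).
  by apply/measurable_EFinP; exact: measurable_normal_pdf.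
have mRN := measurable_int _ (Radon_Nikodym_SigmaFinite.f_integrable numu).
apply: ae_eq_integral => //; [exact: emeasurable_funM|exact: emeasurable_funM|].
apply: ae_eqe_mul2l; apply: integral_ae_eq => //.
- exact: Radon_Nikodym_SigmaFinite.f_integrable.
- by move=> E _ mE; rewrite -Radon_Nikodym_SigmaFinite.f_integral.
Qed.

End normal_density.

Lemma ge0_expectation_normal {R : realType} {d} {T : measurableType d}
    {P : probability T R} {Z : {RV P >-> R}} {m s : R} {f : R -> R} :
  (distribution P Z : set R -> \bar R) = normal_prob m s ->
  measurable_fun setT f -> (forall z, 0 <= f z) ->
  ('E_P[f \o Z] = \int[lebesgue_measure]_z (f z * normal_pdf m s z)%:E)%E.
Proof.
move=> hZ mf f0; have mEf : measurable_fun setT (EFin \o f).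
  exact/measurable_EFinP.
rewrite unlock; transitivity (\int[distribution P Z]_z (f z)%:E)%E.
  by rewrite ge0_integral_distribution// => z; rewrite lee_fin.
(* distribution P Z lives on the Borel sigma-algebra of R and normal_prob on
   the Lebesgue one: the pushforward along the identity mediates between them. *)
pose idR : measurableTypeR R -> R := idfun.
have midR : measurable_fun setT idR := @measurable_id _ _ setT.
transitivity (\int[pushforward (normal_prob m s) idR]_z (f z)%:E)%E.
  by apply: eq_measure_integral => A mA _; exact: (congr1 (fun nu => nu A) hZ).
rewrite ge0_integral_pushforward//; last by move=> z _; rewrite lee_fin.
by rewrite preimage_setT ge0_integral_normal_prob.
Qed.

Lemma ge0_integral_itv_lb {R : realType} (f : R -> R) (a b c : R) :
  measurable_fun setT f -> (forall x, 0 <= f x) -> 0 <= c -> a < b ->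
  (forall x, a <= x <= b -> c <= f x) ->
  ((c * (b - a))%:E <= \int[lebesgue_measure]_x (f x)%:E)%E.
Proof.
move=> mf f0 c0 ab fc.
apply: (@le_trans _ _ (\int[lebesgue_measure]_(x in `[a, b]) (f x)%:E)%E); last first.
  by apply: ge0_subset_integral => // [|x _]; [exact/measurable_EFinP|rewrite lee_fin].
apply: (@le_trans _ _ (\int[lebesgue_measure]_(x in `[a, b]) c%:E)%E).
  by rewrite integral_cst//= lebesgue_measure_itv/= lte_fin ab -EFinD -EFinM.
apply: ge0_le_integral => //=; first exact/measurable_funTS/measurable_EFinP.
Qed.

Section call_payoff.
Context {R : realType}.
Variables (S0 mu sigma Tm K : R).
Local Notation stock := (stock_T S0 mu sigma Tm).
Local Notation payoff := (call_payoff S0 mu sigma Tm K).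
Local Notation phi := (normal_pdf 0 1).

Lemma measurable_stock_T : measurable_fun setT stock.
Proof.
apply: measurable_funM => //; apply: measurableT_comp => //.
by apply: measurable_funD => //; apply: measurable_funM.
Qed.

Lemma measurable_call_payoff : measurable_fun setT payoff.
Proof.
by apply: measurable_maxr => //; apply: measurable_funB => //; exact: measurable_stock_T.
Qed.

Lemma call_payoff_ge0 z : 0 <= payoff z.
Proof. by rewrite /call_payoff le_max lexx orbT. Qed.

Lemma call_payoff_ge z : stock z - K <= payoff z.
Proof. by rewrite /call_payoff le_max lexx. Qed.

Let measurable_EFin_mul_pdf (f : R -> R) : measurable_fun setT f ->
  measurable_fun setT (fun z => (f z * phi z)%:E).
Proof.
by move=> mf; apply/measurable_EFinP/measurable_funM => //; exact: measurable_normal_pdf.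
Qed.

Hypotheses (S0_gt0 : 0 < S0) (Tm_gt0 : 0 < Tm).

Lemma stock_T_ge0 z : 0 <= stock z.
Proof. by rewrite mulr_ge0 ?expR_ge0 ?ltW. Qed.

Lemma call_payoff_le z : 0 <= K -> payoff z <= stock z.
Proof. by move=> K0; rewrite /call_payoff ge_max stock_T_ge0 andbT gerBl. Qed.

Lemma integral_stock_T :
  (\int[lebesgue_measure]_z (stock z * phi z)%:E = (S0 * expR (mu * Tm))%:E)%E.
Proof.
under eq_integral do rewrite /stock_T expRD (mulrA S0) -mulrA EFinM.
rewrite ge0_integralZl//=; last 3 first.
- apply: measurable_EFin_mul_pdf.
  by apply: measurableT_comp => //; exact: measurable_funM.
- by move=> x _; rewrite lee_fin mulr_ge0 ?expR_ge0 ?normal_pdf_ge0.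
- by rewrite lee_fin mulr_ge0 ?expR_ge0 ?ltW.
rewrite normal_mgf ?oner_eq0// -EFinM -(mulrA S0) -expRD; congr (EFin (_ * expR _)).
by rewrite exprMn sqr_sqrtr ?ltW//; field.
Qed.

Hypothesis sigma_gt0 : 0 < sigma.

Lemma stock_T_unbounded {B} : 0 < B ->
  exists2 a, 0 <= a & forall z, a <= z -> B <= stock z.
Proof.
move=> B_gt0; pose c := sigma * Num.sqrt Tm.
pose m := mu * Tm - 2^-1 * sigma ^+ 2 * Tm.
have c_gt0 : 0 < c by rewrite mulr_gt0 ?sqrtr_gt0.
exists (Num.max 0 ((ln (B / S0) - m) / c)); first by rewrite le_max lexx.
move=> z; rewrite ge_max => /andP[_]; rewrite ler_pdivrMr// => lnB_le.
rewrite -[B](divfK (lt0r_neq0 S0_gt0)) mulrC -[B / S0]lnK ?posrE ?divr_gt0//.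
by rewrite ler_pM2l// ler_expR -/m -/c; lra.
Qed.

Hypothesis K_ge0 : 0 <= K.

Local Notation expected_payoff :=
  (\int[lebesgue_measure]_z (payoff z * phi z)%:E)%E.

Lemma expected_payoff_le : (expected_payoff <= (S0 * expR (mu * Tm))%:E)%E.
Proof.
rewrite -integral_stock_T; apply: ge0_le_integral => //.
- by move=> z _; rewrite lee_fin mulr_ge0 ?call_payoff_ge0 ?normal_pdf_ge0.
- apply: measurable_EFin_mul_pdf; exact: measurable_call_payoff.
- apply: measurable_EFin_mul_pdf; exact: measurable_stock_T.
- by move=> z _; rewrite lee_fin ler_wpM2r ?normal_pdf_ge0 ?call_payoff_le.
Qed.

Lemma expected_payoff_ge : ((S0 * expR (mu * Tm))%:E <= expected_payoff + K%:E)%E.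
Proof.
have -> : K%:E = (\int[lebesgue_measure]_z (K * phi z)%:E)%E.
  under eq_integral do rewrite EFinM.
  rewrite ge0_integralZl//= ?integral_normal_pdf ?mule1//.
  - by apply/measurable_EFinP; exact: measurable_normal_pdf.
  - by move=> z _; rewrite lee_fin normal_pdf_ge0.
rewrite -integral_stock_T -ge0_integralD//; first last.
- apply: measurable_EFin_mul_pdf; exact: measurable_cst.
- by move=> z _; rewrite lee_fin mulr_ge0 ?normal_pdf_ge0.
- apply: measurable_EFin_mul_pdf; exact: measurable_call_payoff.
- by move=> z _; rewrite lee_fin mulr_ge0 ?call_payoff_ge0 ?normal_pdf_ge0.
apply: ge0_le_integral => //.
- by move=> z _; rewrite lee_fin mulr_ge0 ?stock_T_ge0 ?normal_pdf_ge0.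
- apply: measurable_EFin_mul_pdf; exact: measurable_stock_T.
- by apply: emeasurable_funD; apply: measurable_EFin_mul_pdf;
    [exact: measurable_call_payoff|exact: measurable_cst].
- move=> z _; rewrite -EFinD lee_fin -mulrDl ler_wpM2r ?normal_pdf_ge0//.
  by rewrite -lerBlDr call_payoff_ge.
Qed.

Lemma expected_payoff_gt0 : (0 < expected_payoff)%E.
Proof.
have [a a_ge0 stock_ge] := stock_T_unbounded (ltr_pwDr ltr01 K_ge0).
have phi_gt0 := normal_pdf_gt0 0 1 (a + 1) (oner_neq0 R).
have a_lt : a < a + 1 by rewrite ltrDl.
have phi_le z : a <= z <= a + 1 -> phi (a + 1) <= payoff z * phi z.
  move=> /andP[az za]; rewrite -[leLHS]mul1r ler_pM ?ler01 ?(ltW phi_gt0)//.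
    by have := call_payoff_ge z; have := stock_ge z az; lra.
  exact: le_normal_pdf (oner_neq0 R) (le_trans a_ge0 az) za.
apply: (lt_le_trans _ (ge0_integral_itv_lb (fun z => payoff z * phi z)
  _ _ _ _ _ (ltW phi_gt0) a_lt phi_le)).
- by rewrite lte_fin addrAC subrr add0r mulr1.
- by apply: measurable_funM; [exact: measurable_call_payoff|exact: measurable_normal_pdf].
- by move=> z; rewrite mulr_ge0 ?call_payoff_ge0 ?normal_pdf_ge0.
Qed.

Lemma expected_payoff_bounds : let EC := fine expected_payoff in
  0 < EC /\ S0 * expR (mu * Tm) - K <= EC.
Proof.
move: expected_payoff_le expected_payoff_ge expected_payoff_gt0.
case: expected_payoff => [EC||]//=; rewrite !lee_fin lte_fin => _ EC_ge EC_gt0.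
by split; rewrite // lerBlDr.
Qed.

End call_payoff.

Lemma ltr_dfun {R : realType} (sigma mu Tm a b : R) :
  0 < sigma -> 0 < Tm -> 0 < a -> a < b -> dfun sigma mu Tm a < dfun sigma mu Tm b.
Proof.
move=> sigma_gt0 Tm_gt0 a_gt0 ab; rewrite /dfun ltr_pM2l ?invr_gt0 ?mulr_gt0 ?sqrtr_gt0//.
by rewrite !ltrD2r ltr_ln// posrE (lt_trans a_gt0 ab).
Qed.

Lemma Cx_compounded {R : realType} (EC S0 mu r Tm x : R) :
  (Cx EC S0 mu r Tm x - x * S0) * expR (r * Tm) =
  EC - x * (S0 * expR (mu * Tm) + S0 * expR (r * Tm)) / 2.
Proof.
by rewrite /Cx mulrBl mulrAC -expRD mulNr addNr expR0 mul1r; field.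
Qed.

Lemma call_price_margin_gt0 {R : realFieldType} {EC u v K x : R} :
  0 < EC -> u - K <= EC -> v < u -> 0 <= x < 1 ->
  0 < EC - x * ((u + v) / 2 - K).
Proof. by move=> EC_gt0 EC_ge vu /andP[x_ge0 x_lt1]; nra. Qed.

Lemma dfun_bounds {R : realType} (EC S0 sigma Tm K mu r x : R) :
  0 < S0 -> 0 < sigma -> 0 < Tm -> 0 < K -> r < mu -> 0 <= x < 1 ->
  0 < EC -> S0 * expR (mu * Tm) - K <= EC ->
  let C := Cx EC S0 mu r Tm x in
  let d := dfun sigma mu Tm (K / S0) in
  let a2 := (K + (C - x * S0) * expR (r * Tm)) / (S0 * (1 - x)) in
  (0 < x -> 0 < x * S0 - C ->
     dfun sigma mu Tm ((x * S0 - C) * expR (r * Tm) / (S0 * x)) < d)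
  /\ 0 < a2 /\ d < dfun sigma mu Tm a2.
Proof.
move=> S0_gt0 sigma_gt0 Tm_gt0 K_gt0 r_lt_mu x01 EC_gt0 EC_ge C d a2.
have x_lt1 : x < 1 by case/andP: x01.
have v_lt_u : S0 * expR (r * Tm) < S0 * expR (mu * Tm).
  by rewrite ltr_pM2l// ltr_expR ltr_pM2r.
have := call_price_margin_gt0 EC_gt0 EC_ge v_lt_u x01.
set M := EC - _ => M_gt0.
have KS0_gt0 : 0 < K / S0 by rewrite divr_gt0.
have a2E : a2 = K / S0 + M / (S0 * (1 - x)).
  rewrite /a2 Cx_compounded /M; field.
  by rewrite subr_eq0 gt_eqF ?lt0r_neq0.
have d_lt_a2 : K / S0 < a2.
  by rewrite a2E ltrDl divr_gt0 // mulr_gt0 // subr_gt0.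
split; last by split; [exact: lt_trans d_lt_a2|exact: ltr_dfun].
move=> x_gt0 xS0_gt_C; apply: ltr_dfun => //.
  by apply: divr_gt0; rewrite mulr_gt0 ?expR_gt0.
have -> : (x * S0 - C) * expR (r * Tm) / (S0 * x) = K / S0 - M / (S0 * x).
  rewrite -opprB mulNr Cx_compounded /M; field.
  by rewrite lt0r_neq0 ?lt0r_neq0.
by rewrite gtrBl divr_gt0 ?mulr_gt0.
Qed.

Theorem mainTheorem3 (R : realType) (dsp : measure_display)
  (Omega : measurableType dsp) (P : probability Omega R)
  (Z : {RV P >-> R})
  (hZ : (distribution P Z : set R -> \bar R) = normal_prob 0 1)
  (S0 sigma Tm K mu r x : R) :
  0 < S0 -> 0 < sigma -> 0 < Tm -> 0 < K -> r < mu -> 0 <= x < 1 ->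
  let EC := fine ('E_P[fun w => call_payoff S0 mu sigma Tm K (Z w)]) in
  let C := Cx EC S0 mu r Tm x in
  let d := dfun sigma mu Tm (K / S0) in
  let a2 := (K + (C - x * S0) * expR (r * Tm)) / (S0 * (1 - x)) in
  let d2 := dfun sigma mu Tm a2 in
  (* d1 = -oo unless x > 0 and x S(0) - C_x > 0; in that case d1 is finite: *)
  (0 < x -> 0 < x * S0 - C ->
     dfun sigma mu Tm ((x * S0 - C) * expR (r * Tm) / (S0 * x)) < d)
  /\ 0 < a2 /\ d < d2.
Proof.
move=> S0_gt0 sigma_gt0 Tm_gt0 K_gt0 r_lt_mu x01 EC.
have [EC_gt0 EC_ge] : 0 < EC /\ S0 * expR (mu * Tm) - K <= EC.
  rewrite /EC (ge0_expectation_normal hZ (measurable_call_payoff _ _ _ _ _)).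
    by apply: expected_payoff_bounds => //; exact: ltW.
  exact: call_payoff_ge0.
exact: dfun_bounds.
Qed.
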